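(* For every protocol $\Pi$ for the game $G_n$ there exists an order oblivious protocol $\Pi'$ for $G_n$ such that $E(\Pi')\subseteq E(\Pi)$. In particular (with Bob using his optimal output rule in $\Pi'$), $c(\Pi')\le c(\Pi)$.
   Context: The game $G_n$ ($n$ a positive integer): Alice receives, as a stream, a permutation $\sigma=(\sigma_1,\dots,\sigma_n)$ of $[n]=\{1,\dots,n\}$ followed by a bit $b\in\{0,1\}$. She has an array $\mathbf{v}=(v_1,\dots,v_n)$ whose cells are initially empty (denoted $*$). For each $i<n$, upon receiving $\sigma_i$ she writes a bit in cell $\sigma_i$; this bit may depend on everything she has received so far ($\sigma_1,\dots,\sigma_i$), and once written cannot be changed. Upon receiving $\sigma_n$ and $b$ she writes $b$ in cell $\sigma_n$. Bob receives the completed array $\mathbf{v}\in\{0,1\}^n$ and outputs a set $J\subseteq[n]$ as a function of $\mathbf{v}$. A protocol (Alice's writing rule together with Bob's output map) is valid if $\sigma_n\in J$ for all $\sigma,b$; its cost $c(\Pi)$ is the maximum of $|J|$ over all $\sigma,b$. All protocols are assumed valid. For a protocol $\Pi$ and permutation $\sigma$, $\Pi_A(\sigma)\in\{0,1,*\}^n$ denotes the array after Alice has processed $\sigma_1,\dots,\sigma_{n-1}$ (so only cell $\sigma_n$ is $*$); it is identified with the edge of the Hamming cube $\{0,1\}^n$ joining its two completions. $E(\Pi)$ is the set of edges $\Pi_A(\sigma)$ over all permutations $\sigma$. A protocol is order oblivious if the bit Alice writes in cell $\sigma_i$ depends only on $\sigma_i$ and on the current partial assignment of $\mathbf{v}$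 (which cells are filled and with which bits), and not on the order in which $\sigma_1,\dots,\sigma_{i-1}$ arrived. *)

From mathcomp Require Import all_boot all_order all_fingroup.
Set Implicit Arguments. Unset Strict Implicit. Unset Printing Implicit Defensive.

Section Game.
Variable n : nat.

(* A permutation sigma = (sigma_1,...,sigma_n) is s : 'S_n, with sigma_{k+1} = s k
   (0-indexed positions k : 'I_n).  Cells are indexed by 'I_n. *)

(* Alice's writing rule: the bit written in cell sigma_{k+1} is a function of the
   received prefix (sigma_1, ..., sigma_{k+1}). *)
Definition alice_rule := seq 'I_n -> bool.

Definition bob_rule := {ffun 'I_n -> bool} -> {set 'I_n}.

Definition prefix (s : 'S_n) (k : nat) : seq 'I_n :=
  [seq s j | j : 'I_n <- enum 'I_n & (nat_of_ord j <= k)%N].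

Definition pos (s : 'S_n) (x : 'I_n) : nat := val ((s^-1)%g x).

(* Partial array after Alice processed the first k elements (None = empty cell). *)
Definition partial_before (A : alice_rule) (s : 'S_n) (k : nat)
  : {ffun 'I_n -> option bool} :=
  [ffun x => if (pos s x < k)%N then Some (A (prefix s (pos s x))) else None].

(* Pi_A(sigma): the array after sigma_1..sigma_{n-1} (only cell sigma_n empty),
   identified with an edge of the Hamming cube. *)
Definition partialA (A : alice_rule) (s : 'S_n) : {ffun 'I_n -> option bool} :=
  partial_before A s n.-1.

Definition final (A : alice_rule) (s : 'S_n) (b : bool) : {ffun 'I_n -> bool} :=
  [ffun x => if pos s x == n.-1 then b else A (prefix s (pos s x))].

Definition edges (A : alice_rule) : {set {ffun 'I_n -> option bool}} :=
  [set partialA A s | s : 'S_n].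

Definition valid (A : alice_rule) (B : bob_rule) : Prop :=
  forall (s : 'S_n) (b : bool) (x : 'I_n), pos s x = n.-1 -> x \in B (final A s b).

Definition cost (A : alice_rule) (B : bob_rule) : nat :=
  \max_(s : 'S_n) \max_(b : bool) #|B (final A s b)|.

Definition order_oblivious (A : alice_rule) : Prop :=
  exists f : 'I_n -> {ffun 'I_n -> option bool} -> bool,
    forall (s : 'S_n) (k : 'I_n), (k < n.-1)%N ->
      A (prefix s k) = f (s k) (partial_before A s k).

End Game.

From Pilot Require Import Defs.
From mathcomp Require Import all_boot all_order all_fingroup.
From Stdlib Require Import ClassicalEpsilon.
Set Implicit Arguments. Unset Strict Implicit. Unset Printing Implicit Defensive.

(* What Alice has written after receiving a set of cells in some order depends
   on that order. Fix, for every partial assignment Alice can reach, one order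
   of arrival producing it, and let the new Alice write in cell x whatever the
   old one would write upon receiving x after that canonical order. By
   induction, every array the new Alice reaches is reached by the old one on a
   reordering of the same cells; in particular every edge of the new protocol
   is an edge of the old one. Bob's optimal answer on an array v is the set of
   cells that could have been the last one; it is valid, and for each v it is
   contained in the answer of the old Bob on the same completed array. *)

Lemma index_take (T : eqType) (x : T) (s : seq T) k :
  (index x s < k)%N -> index x (take k s) = index x s.
Proof. by elim: s k => [|y s IHs] [|k] //=; case: eqP => // _ /IHs ->. Qed.

Section Arrays.
Variable n : nat.
Implicit Types (s t : 'S_n) (A : alice_rule n) (p q : seq 'I_n).
Implicit Types (P : {ffun 'I_n -> option bool}) (x : 'I_n).

Definition arrival s : seq 'I_n := [seq s j | j <- enum 'I_n].

Lemma size_arrival s : size (arrival s) = n.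
Proof. by rewrite size_map size_enum_ord. Qed.

Lemma arrival_uniq s : uniq (arrival s).
Proof. by rewrite map_inj_uniq ?enum_uniq //; apply: perm_inj. Qed.

Lemma mem_arrival s x : x \in arrival s.
Proof. by rewrite -(permKV s x) map_f ?mem_enum. Qed.

Lemma index_arrival s x : index x (arrival s) = pos s x.
Proof.
by rewrite /arrival /pos -{1}(permKV s x) index_map ?index_enum_ord //; apply: perm_inj.
Qed.

Lemma prefix_arrival s (k : nat) :
  (k < n)%N -> Defs.prefix s k = take k.+1 (arrival s).
Proof.
move=> lt_k_n; rewrite /Defs.prefix /arrival -map_take; congr map.
apply: (inj_map val_inj); rewrite map_take.
rewrite -[map val _](filter_map val (fun i => (i <= k)%N)) val_enum_ord.
by rewrite (filter_iota_leq 0 lt_k_n) take_iota (minn_idPl _).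
Qed.

Lemma arrival_surj (Hn : (0 < n)%N) p :
  uniq p -> size p = n -> exists t, arrival t = p.
Proof.
move=> Up Sp; pose x0 := Ordinal Hn.
have nth_inj : injective (fun j : 'I_n => nth x0 p j).
  by move=> i j /eqP; rewrite nth_uniq ?Sp // => /eqP /val_inj.
exists (perm nth_inj); apply: (@eq_from_nth _ x0); first by rewrite size_arrival Sp.
move=> i; rewrite size_arrival => lt_i_n.
by rewrite (nth_map x0) ?size_enum_ord // permE nth_enum_ord.
Qed.

Definition assignment A p : {ffun 'I_n -> option bool} :=
  [ffun x => if x \in p then Some (A (take (index x p).+1 p)) else None].

Lemma assignment_None A p x : (assignment A p x == None) = (x \notin p).
Proof. by rewrite ffunE; case: (x \in p). Qed.

Lemma assignment_mem_eq A1 A2 p1 p2 :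
  assignment A1 p1 = assignment A2 p2 -> p1 =i p2.
Proof.
by move=> E x; apply: negb_inj; rewrite -(assignment_None A1) -(assignment_None A2) E.
Qed.

Definition set_cell P x (v : option bool) : {ffun 'I_n -> option bool} :=
  [ffun y => if y == x then v else P y].

Lemma assignment_rcons A p x : x \notin p ->
  assignment A (rcons p x) = set_cell (assignment A p) x (Some (A (rcons p x))).
Proof.
move=> p'x; apply/ffunP=> y; rewrite !ffunE mem_rcons in_cons -cats1 index_cat.
case: eqP => [->|/eqP ne_yx].
  by rewrite (negbTE p'x) /= eqxx addn0 take_oversize // size_cat addn1.
by case py: (y \in p) => //=; rewrite takel_cat // index_mem.
Qed.

Lemma partial_before_assignment A s (k : nat) :
  (k <= n)%N -> partial_before A s k = assignment A (take k (arrival s)).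
Proof.
move=> le_k_n; apply/ffunP=> x; rewrite !ffunE in_take ?mem_arrival // index_arrival.
case: ifP => // lt_pos_k.
by rewrite index_take ?index_arrival // take_takel // prefix_arrival // ltn_ord.
Qed.

Lemma partialA_assignment A s :
  partialA A s = assignment A (take n.-1 (arrival s)).
Proof. exact/partial_before_assignment/leq_pred. Qed.

Lemma assignment_partialA (Hn : (0 < n)%N) A p :
  uniq p -> size p = n.-1 -> exists t, partialA A t = assignment A p.
Proof.
move=> Up Sp; set full := p ++ [seq y <- enum 'I_n | y \notin p].
have Ufull : uniq full.
  rewrite cat_uniq Up filter_uniq ?enum_uniq // andbT.
  by apply/hasPn=> y; rewrite mem_filter => /andP[].
have Sfull : size full = n.
  rewrite -[RHS](size_enum_ord n); apply/perm_size/uniq_perm; rewrite ?enum_uniq //.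
  by move=> y; rewrite mem_cat mem_filter mem_enum andbT orbN.
have [t Et] := arrival_surj Hn Ufull Sfull.
by exists t; rewrite partialA_assignment Et -Sp take_size_cat.
Qed.

Section ObliviousRule.
Variable A : alice_rule n.

(* A canonical order of arrival producing [P]; junk when [P] is unreachable. *)
Definition canonical_order P : seq 'I_n :=
  epsilon (inhabits [::]) (fun q => uniq q /\ assignment A q = P).

Definition oblivious_bit x P : bool := A (rcons (canonical_order P) x).

Definition oblivious_step P x := set_cell P x (Some (oblivious_bit x P)).

Definition oblivious_state p := foldl oblivious_step [ffun _ => None] p.

Definition oblivious_rule : alice_rule n :=
  fun q => if q is y :: q' then oblivious_bit (last y q') (oblivious_state (belast y q'))
           else false.

Lemma oblivious_rule_rcons p x :
  oblivious_rule (rcons p x) = oblivious_bit x (oblivious_state p).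
Proof. by case: p => //= y p; rewrite last_rcons belast_rcons. Qed.

Lemma oblivious_state_rcons p x :
  oblivious_state (rcons p x) = oblivious_step (oblivious_state p) x.
Proof. by rewrite /oblivious_state -cats1 foldl_cat. Qed.

Lemma oblivious_stateE p : uniq p -> oblivious_state p = assignment oblivious_rule p.
Proof.
elim/last_ind: p => [|p x IHp]; first by move=> _; apply/ffunP=> y; rewrite !ffunE.
rewrite rcons_uniq => /andP[p'x Up].
by rewrite oblivious_state_rcons assignment_rcons // oblivious_rule_rcons IHp.
Qed.

Lemma oblivious_state_reachable p :
  uniq p -> exists q, uniq q /\ assignment A q = oblivious_state p.
Proof.
elim/last_ind: p => [|p x IHp].
  by move=> _; exists [::]; split => //; apply/ffunP=> y; rewrite !ffunE.
rewrite rcons_uniq => /andP[p'x Up].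
set q := canonical_order (oblivious_state p).
have [Uq Eq] : uniq q /\ assignment A q = oblivious_state p.
  exact: epsilon_spec (IHp Up).
have q'x : x \notin q.
  rewrite (assignment_mem_eq (_ : assignment A q = assignment oblivious_rule p)) //.
  by rewrite Eq oblivious_stateE.
exists (rcons q x); rewrite rcons_uniq q'x assignment_rcons // oblivious_state_rcons.
by rewrite Eq.
Qed.

Lemma order_oblivious_rule : order_oblivious oblivious_rule.
Proof.
exists oblivious_bit => s k lt_k_n1.
have le_k_n : (k <= n)%N by apply/ltnW/ltn_ord.
rewrite prefix_arrival // (take_nth k) ?size_arrival // partial_before_assignment //.
rewrite oblivious_rule_rcons oblivious_stateE ?take_uniq ?arrival_uniq //.
rewrite (nth_map k) ?size_enum_ord //.
by congr (oblivious_bit (s _) _); apply/val_inj; rewrite /= nth_enum_ord.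
Qed.

Lemma edges_oblivious_rule (Hn : (0 < n)%N) : edges oblivious_rule \subset edges A.
Proof.
apply/subsetP=> _ /imsetP[s _ ->]; rewrite partialA_assignment.
set p := take n.-1 (arrival s).
have Up : uniq p by rewrite take_uniq // arrival_uniq.
have Sp : size p = n.-1 by rewrite size_takel // size_arrival leq_pred.
have [q [Uq Eq]] := oblivious_state_reachable Up.
have Sq : size q = n.-1.
  rewrite -Sp; apply/perm_size/uniq_perm => //.
  by apply: (assignment_mem_eq (_ : assignment A q = assignment oblivious_rule p));
    rewrite Eq oblivious_stateE.
have [t Et] := assignment_partialA Hn A Uq Sq.
by apply/imsetP; exists t; rewrite // Et Eq oblivious_stateE.
Qed.

End ObliviousRule.

Section OptimalBob.
Hypothesis Hn : (0 < n)%N.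

Lemma pos_lt_pred s x : (pos s x < n.-1)%N = (pos s x != n.-1).
Proof. by rewrite ltn_neqAle -ltnS prednK // ltn_ord andbT. Qed.

Lemma finalE A s b x : final A s b x = odflt b (partialA A s x).
Proof. by rewrite !ffunE pos_lt_pred //; case: (pos s x == n.-1). Qed.

Lemma partialA_None A s x : (partialA A s x == None) = (pos s x == n.-1).
Proof. by rewrite !ffunE pos_lt_pred //; case: (pos s x == n.-1). Qed.

Lemma final_eq A1 A2 s1 s2 b :
  partialA A1 s1 = partialA A2 s2 -> final A1 s1 b = final A2 s2 b.
Proof. by move=> E; apply/ffunP=> x; rewrite !finalE E. Qed.

Lemma partialA_sub_edges A A' s : edges A' \subset edges A ->
  exists t, partialA A' s = partialA A t.
Proof.
move=> /subsetP sub_edges.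
have /sub_edges/imsetP[t _ ->] : partialA A' s \in edges A' by apply/imsetP; exists s.
by exists t.
Qed.

Definition optimal_bob A : bob_rule n := fun v =>
  [set x | [exists s, exists b, (final A s b == v) && (pos s x == n.-1)]].

Lemma valid_optimal_bob A : valid A (optimal_bob A).
Proof.
move=> s b x pos_x; rewrite inE; apply/existsP; exists s; apply/existsP; exists b.
by rewrite eqxx pos_x eqxx.
Qed.

Lemma optimal_bob_sub A A' B s t b : valid A B ->
  edges A' \subset edges A -> partialA A' s = partialA A t ->
  optimal_bob A' (final A' s b) \subset B (final A t b).
Proof.
move=> validAB sub_edges Est; apply/subsetP=> x.
rewrite inE => /existsP[s' /existsP[b' /andP[/eqP Ev /eqP pos_x]]].
have [t' Et'] := partialA_sub_edges s' sub_edges.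
rewrite -(final_eq b Est) -Ev (final_eq b' Et'); apply: validAB.
by apply/eqP; rewrite -(partialA_None A) -Et' partialA_None pos_x.
Qed.

Lemma cost_optimal_bob A A' B : valid A B ->
  edges A' \subset edges A -> (cost A' (optimal_bob A') <= cost A B)%N.
Proof.
move=> validAB sub_edges; apply/bigmax_leqP=> s _; apply/bigmax_leqP=> b _.
have [t Est] := partialA_sub_edges s sub_edges.
apply: leq_trans (subset_leq_card (optimal_bob_sub b validAB sub_edges Est)) _.
apply: leq_trans (leq_bigmax t) => /=.
exact: (leq_bigmax (F := fun b => #|B (final A t b)|)).
Qed.

End OptimalBob.
End Arrays.

Theorem proposition2 (n : nat) (Hn : (0 < n)%N)
    (A : alice_rule n) (B : bob_rule n) :
  valid A B ->
  exists (A' : alice_rule n) (B' : bob_rule n),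
    [/\ valid A' B', order_oblivious A',
        edges A' \subset edges A & (cost A' B' <= cost A B)%N].
Proof.
move=> validAB; have sub_edges := edges_oblivious_rule A Hn.
exists (oblivious_rule A), (optimal_bob (oblivious_rule A)); split.
- exact: valid_optimal_bob.
- exact: order_oblivious_rule.
- exact: sub_edges.
- exact: cost_optimal_bob.
Qed.
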